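(* Let $\lambda=(\lambda_1,\lambda_2,\lambda_3)$ with $\lambda_1\ge\lambda_2\ge\lambda_3\ge1$ integers, and $A=\mathcal{L}(\lambda)$. (1) If $\lambda_1=\lambda_2=\lambda_3$: $\mathbb{SG}(A)=0$ if $\lambda_3\ge3$ is odd; $\mathbb{SG}(A)=1$ if $\lambda_3=1$ or $\lambda_3\ge4$ is even; $\mathbb{SG}(A)=2$ if $\lambda_3=2$. (2) If $\lambda_1>\lambda_2=\lambda_3$: $\mathbb{SG}(A)=0$ if $\lambda_3$ is odd, $1$ if $\lambda_3$ is even. (3) If $\lambda_1=\lambda_2>\lambda_3$: $\mathbb{SG}(A)=0$ if $\lambda_3$ is even, $1$ if $\lambda_3$ is odd. (4) If $\lambda_1>\lambda_2>\lambda_3=1$: $\mathbb{SG}(A)=1$ if $\lambda_2$ is even, $2$ if $\lambda_2$ is odd. (5) If $\lambda_1>\lambda_2>\lambda_3>1$: $\mathbb{SG}(A)=0$ if $\lambda_3$ is even, $1$ if $\lambda_3$ is odd.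
   Context: A partition is a finite non-increasing sequence of positive integers; $()$ is the empty partition. For non-negative $i,j$, $\lambda[i,j]$ is $(\lambda_{i+1}-j,\dots,\lambda_r-j)$ with all non-positive entries removed. LCTR: positions $\mathcal{L}(\lambda)$; if $\lambda\neq()$ the two moves go to $\mathcal{L}(\lambda[1,0])$ and $\mathcal{L}(\lambda[0,1])$; $\mathcal{L}(())$ is terminal. Normal play; $\mathbb{SG}(A)=\operatorname{mex}\{\mathbb{SG}(B):A\to B\}$. *)

From mathcomp Require Import all_boot.
Set Implicit Arguments. Unset Strict Implicit. Unset Printing Implicit Defensive.

(* A partition is represented as a seq nat (non-increasing, positive entries). *)

Definition cut_row (l : seq nat) : seq nat := behead l.

Definition cut_col (l : seq nat) : seq nat := [seq x.-1 | x <- l & 1 < x].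

Definition mex (s : seq nat) : nat :=
  find (fun n => n \notin s) (iota 0 (size s).+1).

(* Sprague-Grundy value with fuel; each move strictly decreases sumn for a
   nonempty partition, so fuel (sumn l) suffices. *)
Fixpoint sg_fuel (k : nat) (l : seq nat) : nat :=
  match k with
  | 0 => 0
  | k'.+1 =>
    if l is [::] then mex [::]
    else mex [:: sg_fuel k' (cut_row l); sg_fuel k' (cut_col l)]
  end.

Definition SG (l : seq nat) : nat := sg_fuel (sumn l).+1 l.

Lemma SG_test : [:: SG [:: 1;1;1]; SG [:: 2;2;2]; SG [:: 3;3;3]; SG [:: 4;4;4];
   SG [:: 5;3;1]; SG [:: 5;4;1]; SG[::6;4;3]; SG[::6;5;3]] = [:: 1;2;0;1;2;1;1;1].
Proof. by vm_compute. Qed.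

From mathcomp Require Import all_boot zify.

(* Both moves keep a partition with at most three parts and remove at least
   one cell, so any function on such partitions that vanishes on [::] and
   satisfies the mex recursion is the Sprague-Grundy value.  The closed forms
   [sg_row], [sg_two], [sg_three] satisfy it: after splitting each part into
   the cases 1, 2 or larger, the recursion only involves equalities between
   neighbouring parts and parities, a finite check. *)

Definition is_partition (l : seq nat) : bool := sorted geq l && all (leq 1) l.

Lemma is_partition_cut_row (l : seq nat) :
  is_partition l -> is_partition (cut_row l).
Proof.
by case: l => [|x t] // /andP[/path_sorted st /= /andP[_ pt]]; apply/andP.
Qed.

Lemma is_partition_cut_col (l : seq nat) :
  is_partition l -> is_partition (cut_col l).
Proof.
case/andP=> sl _; apply/andP; split.
  have geq_trans : transitive geq by move=> y x z /= le_yx le_zy; lia.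
  rewrite sorted_map; apply: sub_sorted (sorted_filter geq_trans _ sl).
  by move=> x y /=; lia.
by apply/allP=> _ /mapP[x + ->]; rewrite mem_filter => /andP[x_gt1 _]; lia.
Qed.

Lemma sumn_cut_row_lt {l : seq nat} :
  is_partition l -> l != [::] -> sumn (cut_row l) < sumn l.
Proof. by case: l => [|x t] // /andP[_ /= /andP[x_gt0 _]] _; lia. Qed.

Lemma sumn_cut_col_lt {l : seq nat} :
  is_partition l -> l != [::] -> sumn (cut_col l) < sumn l.
Proof.
case/andP=> _; rewrite /cut_col; case: l => [|x t] //= /andP[x_gt0 _] _.
suff : sumn [seq y.-1 | y <- t & 1 < y] <= sumn t by case: ifP => /= _; lia.
elim: t => [|y t IH] //=; case: ifP => /= _; lia.
Qed.

Lemma size_cut_row (l : seq nat) : size (cut_row l) <= size l.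
Proof. by rewrite size_behead leq_pred. Qed.

Lemma size_cut_col (l : seq nat) : size (cut_col l) <= size l.
Proof. by rewrite size_map size_filter count_size. Qed.

Section SGCharacterisation.

Variables (P : pred (seq nat)) (G : seq nat -> nat).
Hypothesis P_partition : forall l, P l -> is_partition l.
Hypothesis P_cut_row : forall l, P l -> P (cut_row l).
Hypothesis P_cut_col : forall l, P l -> P (cut_col l).
Hypothesis G_nil : G [::] = 0.
Hypothesis G_mex : forall l, P l -> l != [::] ->
  G l = mex [:: G (cut_row l); G (cut_col l)].

Lemma sg_fuel_eq k l : P l -> sumn l < k -> sg_fuel k l = G l.
Proof.
elim: k l => [|k IH] l Pl lt_k //.
have [-> | l_nil] := eqVneq l [::]; first by rewrite G_nil.
have /P_partition Pp := Pl; rewrite ltnS in lt_k.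
rewrite G_mex // -!IH ?P_cut_row ?P_cut_col //.
- by case: l {Pl Pp lt_k} l_nil.
- exact: leq_trans (sumn_cut_col_lt Pp l_nil) lt_k.
- exact: leq_trans (sumn_cut_row_lt Pp l_nil) lt_k.
Qed.

Lemma SG_eq l : P l -> SG l = G l.
Proof. by move=> Pl; apply: sg_fuel_eq. Qed.

End SGCharacterisation.

Definition sg_row (a : nat) : nat := if odd a then 1 else 2.

Definition sg_two (a b : nat) : nat :=
  if a == b then (if odd b then 2 else 0) else if odd b then 0 else 1.

Definition sg_three (a b c : nat) : nat :=
  if (a == b) && (b == c) then
    (if c == 1 then 1 else if c == 2 then 2 else if odd c then 0 else 1)
  else if b == c then (if odd c then 0 else 1)
  else if (c == 1) && (a != b) then (if odd b then 2 else 1)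
  else if odd c then 1 else 0.

Definition sg_short (l : seq nat) : nat :=
  match l with
  | [::] => 0
  | [:: a] => sg_row a
  | [:: a; b] => sg_two a b
  | [:: a; b; c] => sg_three a b c
  | _ => 0
  end.

Ltac decide_cases :=
  repeat match goal with
  | |- context [if ?b then _ else _] => case: (boolP b) => ?
  end;
  repeat match goal with
  | H : is_true (_ == _) |- _ => move/eqP: H => H; subst
  end;
  repeat match goal with
  | H : is_true (odd _) |- _ => rewrite H in *; clear H
  | H : is_true (~~ odd _) |- _ => rewrite (negbTE H) in *; clear H
  end; try done; lia.

Lemma sg_row_mex a : 0 < a -> sg_row a = mex [:: 0; sg_short (cut_col [:: a])].
Proof.
by case: a => [|[|a]] // _; rewrite /cut_col /= /sg_row /= negbK; case: (odd a).
Qed.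

Lemma sg_two_mex a b : 0 < b <= a ->
  sg_two a b = mex [:: sg_row b; sg_short (cut_col [:: a; b])].
Proof.
case: b => [|[|b]]; case: a => [|[|a]] //= _;
  rewrite /cut_col /= /sg_two /sg_row /= ?eqSS ?negbK; decide_cases.
Qed.

Lemma sg_three_mex a b c : 0 < c <= b -> b <= a ->
  sg_three a b c = mex [:: sg_two b c; sg_short (cut_col [:: a; b; c])].
Proof.
case: c => [|[|c]]; case: b => [|[|b]]; case: a => [|[|a]] //= _ _;
  rewrite /cut_col /= /sg_three /sg_two /sg_row /= ?eqSS ?negbK; decide_cases.
Qed.

Definition short_partition (l : seq nat) : bool :=
  is_partition l && (size l <= 3).

Lemma sg_short_mex l : short_partition l -> l != [::] ->
  sg_short l = mex [:: sg_short (cut_row l); sg_short (cut_col l)].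
Proof.
case: l => [|a [|b [|c [|d t]]]] //= /andP[/andP[/= sl pl] size_le3] _.
- by rewrite sg_row_mex //; lia.
- by rewrite sg_two_mex //; lia.
- by rewrite sg_three_mex //; lia.
- by rewrite /= !ltnS in size_le3.
Qed.

Lemma SG_short l : short_partition l -> SG l = sg_short l.
Proof.
apply: SG_eq => // {}l.
- by case/andP.
- rewrite /short_partition => /andP[/is_partition_cut_row -> le3].
  exact: leq_trans (size_cut_row l) le3.
- rewrite /short_partition => /andP[/is_partition_cut_col -> le3].
  exact: leq_trans (size_cut_col l) le3.
- exact: sg_short_mex.
Qed.

Theorem mainTheorem9 (l1 l2 l3 : nat) :
  1 <= l3 -> l3 <= l2 -> l2 <= l1 ->
  let A := SG [:: l1; l2; l3] in
  (* (1) *)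
  (l1 = l2 -> l2 = l3 ->
     ((3 <= l3 -> odd l3 -> A = 0) /\
      (l3 = 1 \/ (4 <= l3 /\ ~~ odd l3) -> A = 1) /\
      (l3 = 2 -> A = 2))) /\
  (* (2) *)
  (l2 < l1 -> l2 = l3 -> A = (if odd l3 then 0 else 1)) /\
  (* (3) *)
  (l1 = l2 -> l3 < l2 -> A = (if odd l3 then 1 else 0)) /\
  (* (4) *)
  (l2 < l1 -> l3 < l2 -> l3 = 1 -> A = (if odd l2 then 2 else 1)) /\
  (* (5) *)
  (l2 < l1 -> l3 < l2 -> 1 < l3 -> A = (if odd l3 then 1 else 0)).
Proof.
move=> l3_gt0 le_l32 le_l21 A.
have -> : A = sg_three l1 l2 l3.
  by rewrite /A SG_short // /short_partition /is_partition /=; lia.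
rewrite /sg_three.
split; [move=> e1 e2; subst; split; [|split]|split; [|split; [|split]]] => *;
  subst; decide_cases.
Qed.
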